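(* The variety $\mathsf{V}(S_{(4,471)})$ is the ai-semiring variety defined by the identities $xy\approx yx$, $x^2\approx x^2+xy$, $x_1\approx x_1+x_2x_3x_4$.
   Context: An ai-semiring is an algebra $(S,+,\cdot)$ with $(S,+)$ a semilattice, $(S,\cdot)$ a semigroup, and both distributive laws. $\mathsf{V}(S)$ is the variety generated by $S$; ''the ai-semiring variety defined by identities $\Sigma$'' is the class of all ai-semirings satisfying $\Sigma$ (equivalently, an identity holds in $S$ iff it follows from $\Sigma$ and the ai-semiring axioms). $S_{(4,471)}$ has carrier $\{1,2,3,4\}$; addition: $x+x=x$, $2+x=x$, $1+x=1$ for all $x$, $3+4=1$; multiplication (row $a$, column $b$ gives $a\cdot b$): row $1$: $3,2,2,3$; row $2$: $2,2,2,2$; row $3$: $2,2,2,2$; row $4$: $3,2,2,3$. *)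

From Stdlib Require Import List.

Inductive term : Type :=
| Var : nat -> term
| Add : term -> term -> term
| Mul : term -> term -> term.

Fixpoint eval {A : Type} (add mul : A -> A -> A) (v : nat -> A) (t : term) : A :=
  match t with
  | Var n => v n
  | Add t1 t2 => add (eval add mul v t1) (eval add mul v t2)
  | Mul t1 t2 => mul (eval add mul v t1) (eval add mul v t2)
  end.

Definition satisfies {A : Type} (add mul : A -> A -> A) (u v : term) : Prop :=
  forall val : nat -> A, eval add mul val u = eval add mul val v.

Definition is_ai_semiring {A : Type} (add mul : A -> A -> A) : Prop :=
  (forall x y z, add x (add y z) = add (add x y) z) /\
  (forall x y, add x y = add y x) /\
  (forall x, add x x = x) /\
  (forall x y z, mul x (mul y z) = mul (mul x y) z) /\
  (forall x y z, mul x (add y z) = add (mul x y) (mul x z)) /\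
  (forall x y z, mul (add x y) z = add (mul x z) (mul y z)).

Definition x_ (n : nat) : term := Var n.

Definition Sigma : list (term * term) :=
  (Mul (x_ 0) (x_ 1), Mul (x_ 1) (x_ 0)) ::
  (Mul (x_ 0) (x_ 0), Add (Mul (x_ 0) (x_ 0)) (Mul (x_ 0) (x_ 1))) ::
  (x_ 1, Add (x_ 1) (Mul (Mul (x_ 2) (x_ 3)) (x_ 4))) :: nil.

Definition satisfies_all {A : Type} (add mul : A -> A -> A)
    (E : list (term * term)) : Prop :=
  forall p, List.In p E -> satisfies add mul (fst p) (snd p).

Definition holds_in_variety_of (E : list (term * term)) (u v : term) : Prop :=
  forall (A : Type) (add mul : A -> A -> A),
    is_ai_semiring add mul -> satisfies_all add mul E -> satisfies add mul u v.

Inductive S4 : Type := e1 | e2 | e3 | e4.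

Definition S_add (a b : S4) : S4 :=
  match a, b with
  | e1, _ => e1
  | _, e1 => e1
  | e2, x => x
  | x, e2 => x
  | e3, e3 => e3
  | e4, e4 => e4
  | e3, e4 => e1
  | e4, e3 => e1
  end.

Definition S_mul (a b : S4) : S4 :=
  match a, b with
  | e1, e1 => e3 | e1, e2 => e2 | e1, e3 => e2 | e1, e4 => e3
  | e2, _ => e2
  | e3, _ => e2
  | e4, e1 => e3 | e4, e2 => e2 | e4, e3 => e2 | e4, e4 => e3
  end.

From Stdlib Require Import List Arith Bool.
Import ListNotations.

(* In an ai-semiring every term is the join of the words (products of
   variables) obtained by expanding it with the distributive laws.  Modulo
   Sigma a word of length at least 3 lies below everything and a word xy lies
   below each of xy, yx, x^2, y^2; hence the value of a term depends only on
   its one-letter words and on the pairs {x, y} carrying a two-letter word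
   over {x, y}.  S_(4,471) sees both data: with x valued 3 and every other
   variable 2, a term leaves the ideal {2, 4} exactly when x is one of its
   one-letter words; with x, y valued 4 and every other variable 2, exactly
   when it has a two-letter word over {x, y}. *)

(* A word is kept nonempty, as its first letter and the remaining ones, so
   that it has a value in every semigroup. *)
Definition word : Type := nat * list nat.

Definition word_app (w1 w2 : word) : word := (fst w1, snd w1 ++ fst w2 :: snd w2).

Fixpoint words (t : term) : list word :=
  match t with
  | Var n => [(n, [])]
  | Add a b => words a ++ words b
  | Mul a b => flat_map (fun w1 => map (word_app w1) (words b)) (words a)
  end.

Definition covers (W : list word) (w : word) : Prop :=
  match w with
  | (x, []) => In (x, []) W
  | (x, [y]) => exists a b, In (a, [b]) W /\ (a = x \/ a = y) /\ (b = x \/ b = y)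
  | _ => True
  end.

Section AiSemiring.

Context {A : Type} (add mul : A -> A -> A).
Hypothesis ai : is_ai_semiring add mul.

Let addA : forall x y z, add x (add y z) = add (add x y) z := proj1 ai.
Let addC : forall x y, add x y = add y x := proj1 (proj2 ai).
Let addI : forall x, add x x = x := proj1 (proj2 (proj2 ai)).
Let mulA : forall x y z, mul x (mul y z) = mul (mul x y) z :=
  proj1 (proj2 (proj2 (proj2 ai))).
Let mulDr : forall x y z, mul x (add y z) = add (mul x y) (mul x z) :=
  proj1 (proj2 (proj2 (proj2 (proj2 ai)))).
Let mulDl : forall x y z, mul (add x y) z = add (mul x z) (mul y z) :=
  proj2 (proj2 (proj2 (proj2 (proj2 ai)))).

Definition below (a b : A) : Prop := add a b = b.

Lemma below_refl a : below a a.
Proof. apply addI. Qed.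

Lemma below_trans a b c : below a b -> below b c -> below a c.
Proof. unfold below; intros Hab Hbc. now rewrite <- Hbc, addA, Hab. Qed.

Lemma below_antisym a b : below a b -> below b a -> a = b.
Proof. unfold below; intros Hab Hba. now rewrite <- Hab, addC. Qed.

Lemma below_add_iff a b c : below (add a b) c <-> below a c /\ below b c.
Proof.
  unfold below; split.
  - intros H; split.
    + now rewrite <- H, addA, addA, addI.
    + now rewrite <- H, (addC a b), addA, addA, addI.
  - intros [Ha Hb]. now rewrite <- addA, Hb.
Qed.

Variable val : nat -> A.

Definition word_eval (w : word) : A :=
  fold_left (fun p n => mul p (val n)) (snd w) (val (fst w)).

Lemma fold_mul_l r x y :
  fold_left (fun p n => mul p (val n)) r (mul x y)
  = mul x (fold_left (fun p n => mul p (val n)) r y).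
Proof.
  revert y; induction r as [|n r IH]; intros y; simpl; [reflexivity|].
  now rewrite <- mulA, IH.
Qed.

Lemma word_eval_app w1 w2 :
  word_eval (word_app w1 w2) = mul (word_eval w1) (word_eval w2).
Proof.
  destruct w1 as [a r], w2 as [b s]; unfold word_eval; simpl.
  rewrite fold_left_app; simpl. apply fold_mul_l.
Qed.

Lemma word_eval_long a b c r :
  word_eval (a, b :: c :: r) = mul (mul (val a) (val b)) (word_eval (c, r)).
Proof. apply fold_mul_l. Qed.

(* Stated for a join-homomorphic context f so that the induction goes through
   products, where f absorbs the cofactor. *)
Lemma below_map_eval_iff (f : A -> A) t c :
  (forall x y, f (add x y) = add (f x) (f y)) ->
  below (f (eval add mul val t)) c <->
  forall w, In w (words t) -> below (f (word_eval w)) c.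
Proof.
  revert f c; induction t as [n|a IHa b IHb|a IHa b IHb]; intros f c hf; simpl.
  - split; [now intros H w [<-|[]] | intros H; now apply (H (n, [])); left].
  - rewrite hf, below_add_iff, IHa, IHb by assumption.
    setoid_rewrite in_app_iff. firstorder.
  - assert (hfr : forall y x1 x2, f (mul (add x1 x2) y) = add (f (mul x1 y)) (f (mul x2 y)))
      by (intros; now rewrite mulDl).
    assert (hfl : forall x y1 y2, f (mul x (add y1 y2)) = add (f (mul x y1)) (f (mul x y2)))
      by (intros; now rewrite mulDr).
    rewrite (IHa (fun z => f (mul z (eval add mul val b)))) by apply hfr.
    split.
    + intros H w Hw.
      apply in_flat_map in Hw as [w1 [Hw1 Hw]]. apply in_map_iff in Hw as [w2 [<- Hw2]].
      rewrite word_eval_app.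
      now apply (IHb (fun z => f (mul (word_eval w1) z))); auto.
    + intros H w1 Hw1. apply (IHb (fun z => f (mul (word_eval w1) z))); [apply hfl|].
      intros w2 Hw2. rewrite <- word_eval_app. apply H.
      apply in_flat_map. exists w1. split; [assumption|]. now apply in_map.
Qed.

Lemma below_eval_iff t c :
  below (eval add mul val t) c <-> forall w, In w (words t) -> below (word_eval w) c.
Proof. now apply (below_map_eval_iff (fun x => x)). Qed.

Lemma word_eval_below_eval t w : In w (words t) -> below (word_eval w) (eval add mul val t).
Proof. revert w. apply below_eval_iff, below_refl. Qed.

Hypothesis sigma : satisfies_all add mul Sigma.

Lemma Sigma_mulC x y : mul x y = mul y x.
Proof. exact (sigma _ (or_introl eq_refl) (fun n => match n with 0 => x | _ => y end)). Qed.

Lemma Sigma_below_sq x y : below (mul x y) (mul x x).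
Proof.
  unfold below. rewrite addC. symmetry.
  exact (sigma _ (or_intror (or_introl eq_refl)) (fun n => match n with 0 => x | _ => y end)).
Qed.

Lemma Sigma_below_mul3 x y z c : below (mul (mul x y) z) c.
Proof.
  unfold below. rewrite addC. symmetry.
  exact (sigma _ (or_intror (or_intror (or_introl eq_refl)))
           (fun n => match n with 1 => c | 2 => x | 3 => y | _ => z end)).
Qed.

Lemma word_eval_below_of_covers t w :
  covers (words t) w -> below (word_eval w) (eval add mul val t).
Proof.
  destruct w as [x [|y [|z r]]]; simpl.
  - apply (word_eval_below_eval t (x, [])).
  - intros (a & b & Hab & Ha & Hb).
    apply below_trans with (word_eval (a, [b])); [|now apply word_eval_below_eval].
    unfold word_eval; simpl.
    destruct Ha as [-> | ->], Hb as [-> | ->].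
    + apply Sigma_below_sq.
    + apply below_refl.
    + rewrite Sigma_mulC. apply below_refl.
    + rewrite Sigma_mulC. apply Sigma_below_sq.
  - intros _. rewrite word_eval_long. apply Sigma_below_mul3.
Qed.

Lemma eval_below_of_covers u v :
  (forall w, In w (words u) -> covers (words v) w) ->
  below (eval add mul val u) (eval add mul val v).
Proof.
  intros H. apply below_eval_iff. intros w Hw. now apply word_eval_below_of_covers, H.
Qed.

End AiSemiring.

Lemma S_ai : is_ai_semiring S_add S_mul.
Proof.
  repeat split; intros; repeat match goal with x : S4 |- _ => destruct x end; reflexivity.
Qed.

Lemma S_Sigma : satisfies_all S_add S_mul Sigma.
Proof.
  intros p Hp val. destruct Hp as [<-|[<-|[<-|[]]]]; simpl;
    repeat match goal with |- context [val ?n] => destruct (val n) end; reflexivity.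
Qed.

Lemma S_below_e4_dec a : {below S_add a e4} + {~ below S_add a e4}.
Proof. unfold below; destruct a; simpl; (left; reflexivity) || (right; discriminate). Qed.

Lemma S_long_below_e4 val a b c r : below S_add (word_eval S_mul val (a, b :: c :: r)) e4.
Proof.
  rewrite (word_eval_long S_add) by exact S_ai.
  destruct (val a), (val b), (word_eval S_mul val (c, r)); reflexivity.
Qed.

Lemma S_high_word_transfer u v val w :
  satisfies S_add S_mul u v -> In w (words u) ->
  ~ below S_add (word_eval S_mul val w) e4 ->
  exists w', In w' (words v) /\ ~ below S_add (word_eval S_mul val w') e4.
Proof.
  intros Huv Hw Hhigh.
  destruct (Forall_Exists_dec _ (fun w => S_below_e4_dec (word_eval S_mul val w)) (words v))
    as [Hlow|Hex]; [|now apply Exists_exists].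
  exfalso. apply Hhigh. clear Hhigh. revert w Hw.
  apply (below_eval_iff S_add S_mul S_ai val). rewrite (Huv val).
  apply (below_eval_iff S_add S_mul S_ai val). now apply Forall_forall.
Qed.

Lemma S_covers u v :
  satisfies S_add S_mul u v -> forall w, In w (words u) -> covers (words v) w.
Proof.
  intros Huv [x [|y [|z r]]] Hw; simpl; [| |exact I].
  - destruct (S_high_word_transfer u v (fun n => if n =? x then e3 else e2) _ Huv Hw)
      as ([a [|b [|c r]]] & Hw' & Hhigh).
    + unfold word_eval; simpl. rewrite Nat.eqb_refl. discriminate.
    + unfold word_eval in Hhigh; simpl in Hhigh.
      destruct (Nat.eqb_spec a x) as [->|]; [assumption|].
      now contradict Hhigh.
    + unfold word_eval in Hhigh; simpl in Hhigh.
      now destruct (a =? x), (b =? x); contradict Hhigh.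
    + now contradict Hhigh; apply S_long_below_e4.
  - destruct (S_high_word_transfer u v
                (fun n => if (n =? x) || (n =? y) then e4 else e2) _ Huv Hw)
      as ([a [|b [|c r]]] & Hw' & Hhigh).
    + unfold word_eval; simpl. rewrite !Nat.eqb_refl, orb_true_r. discriminate.
    + unfold word_eval in Hhigh; simpl in Hhigh.
      now destruct ((a =? x) || (a =? y)); contradict Hhigh.
    + exists a, b. split; [assumption|].
      unfold word_eval in Hhigh; simpl in Hhigh.
      destruct (Nat.eqb_spec a x), (Nat.eqb_spec a y), (Nat.eqb_spec b x),
        (Nat.eqb_spec b y); simpl in Hhigh; auto; now contradict Hhigh.
    + now contradict Hhigh; apply S_long_below_e4.
Qed.

Theorem proposition2p5 :
  forall u v : term,
    satisfies S_add S_mul u v <-> holds_in_variety_of Sigma u v.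
Proof.
  intros u v. split.
  - intros Huv A add mul ai sigma val.
    assert (Hvu : satisfies S_add S_mul v u) by (intros val'; symmetry; apply Huv).
    apply (below_antisym add mul ai);
      apply (eval_below_of_covers add mul ai val sigma); now apply S_covers.
  - intros H. exact (H S4 S_add S_mul S_ai S_Sigma).
Qed.
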